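(* Let $S=(\mathcal{E},\Sigma,X,\mathcal{O})$ be an entity and for $A\subseteq X$ define $cl(A)=\bigcap\{X\setminus O(e,p): (e,p)\in\mathcal{E}\times\Sigma,\ O(e,p)\subseteq X\setminus A\}$ (the empty intersection being $X$). Then $cl$ is a closure operator on $X$; every $O(e,p)$ is open for this closure (i.e. $X\setminus O(e,p)$ is closed); for all $e,p$ and $A\subseteq X$, $O(e,p)\subseteq X\setminus cl(A)\iff O(e,p)\subseteq X\setminus A$; and $eig(A)=eig(int(A))$, where $int(A)=X\setminus cl(X\setminus A)$.
   Context: An entity $S=(\mathcal{E},\Sigma,X,\mathcal{O})$ consists of sets $\mathcal{E},\Sigma$ and for each $e\in\mathcal{E},p\in\Sigma$ a nonempty set $O(e,p)$, with $X=\bigcup O(e,p)$. A closure operator on $X$ is a map $cl:\mathcal{P}(X)\to\mathcal{P}(X)$ with $K\subseteq cl(K)$, $K\subseteq L\Rightarrow cl(K)\subseteq cl(L)$, $cl(cl(K))=cl(K)$, $cl(\emptyset)=\emptyset$. The central eigen map is $eig(A)=\{(e,p):O(e,p)\subseteq A\}$. *)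

From mathcomp Require Import all_boot.
From mathcomp Require Import boolp classical_sets.
Set Implicit Arguments. Unset Strict Implicit. Unset Printing Implicit Defensive.
Local Open Scope classical_set_scope.

(* An entity: index types E (entities/experiments) and Sig (properties),
   a point type T and outcome sets O e p : set T. The carrier X is the union. *)
Section Entity.
Context {E Sig T : Type} (O : E -> Sig -> set T).

Definition carrier : set T := \bigcup_(ep in [set: E * Sig]) O ep.1 ep.2.

Definition ent_cl (A : set T) : set T :=
  carrier `&` \bigcap_(ep in [set ep : E * Sig | O ep.1 ep.2 `<=` carrier `\` A])
                 (carrier `\` O ep.1 ep.2).

Definition ent_int (A : set T) : set T := carrier `\` ent_cl (carrier `\` A).

Definition eig (A : set T) : set (E * Sig) := [set ep | O ep.1 ep.2 `<=` A].
End Entity.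

Definition is_closure_op {T : Type} (X : set T) (cl : set T -> set T) : Prop :=
  [/\ (forall K, K `<=` X -> cl K `<=` X),
      (forall K, K `<=` X -> K `<=` cl K),
      (forall K L, K `<=` X -> L `<=` X -> K `<=` L -> cl K `<=` cl L),
      (forall K, K `<=` X -> cl (cl K) = cl K)
    & cl set0 = set0].

Definition cl_closed {T : Type} (X : set T) (cl : set T -> set T) (C : set T) :=
  C `<=` X /\ cl C = C.
Definition cl_open {T : Type} (X : set T) (cl : set T -> set T) (U : set T) :=
  U `<=` X /\ cl_closed X cl (X `\` U).

From mathcomp Require Import all_boot.
From mathcomp Require Import boolp classical_sets.
Local Open Scope classical_set_scope.

(* A point of X lies in cl(A) exactly when no outcome set containing it
   avoids A. Hence an outcome set avoids cl(A) iff it avoids A, and every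
   closure property, the openness of the outcome sets and the invariance of
   eig under interior follow from this one equivalence. *)

Section EntityClosure.
Context {E Sig T : Type} (O : E -> Sig -> set T).

Local Notation X := (carrier O).
Local Notation cl := (ent_cl O).

Lemma outcome_sub_carrier e p : O e p `<=` X.
Proof. by move=> x Oepx; exists (e, p). Qed.

Lemma outcome_subsetD_carrier e p A :
  O e p `<=` X `\` A <-> (forall x, O e p x -> ~ A x).
Proof.
split=> [OepXA x /OepXA [] //|Oep_notA x Oepx].
by split; [exact: outcome_sub_carrier Oepx | exact: Oep_notA].
Qed.

Lemma ent_clP A x :
  cl A x <-> X x /\ forall e p, O e p `<=` X `\` A -> ~ O e p x.
Proof.
split=> [[Xx clx]|[Xx clx]]; split=> //.
- by move=> e p OepXA; have [] := clx (e, p) OepXA.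
- by move=> [e p] /= OepXA; split=> //; exact: clx.
Qed.

Lemma ent_cl_sub_carrier A : cl A `<=` X.
Proof. by move=> x /ent_clP []. Qed.

Lemma ent_cl_extensive A : A `<=` X -> A `<=` cl A.
Proof.
move=> AX x Ax; apply/ent_clP; split; first exact: AX.
by move=> e p /outcome_subsetD_carrier Oep_notA /Oep_notA.
Qed.

Lemma ent_cl_monotone A B : A `<=` B -> cl A `<=` cl B.
Proof.
move=> AB x /ent_clP [Xx clAx]; apply/ent_clP; split=> // e p.
move=> /outcome_subsetD_carrier Oep_notB; apply: clAx.
by apply/outcome_subsetD_carrier => y Oepy /AB; exact: Oep_notB.
Qed.

Lemma outcome_subsetD_ent_cl e p A : A `<=` X ->
  (O e p `<=` X `\` cl A <-> O e p `<=` X `\` A).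
Proof.
move=> AX; split.
- move=> /outcome_subsetD_carrier Oep_notclA.
  apply/outcome_subsetD_carrier => x Oepx /(ent_cl_extensive _ AX).
  exact: Oep_notclA.
- move=> OepXA; apply/outcome_subsetD_carrier => x Oepx /ent_clP [_ clAx].
  exact: clAx OepXA Oepx.
Qed.

Lemma ent_cl_idem A : A `<=` X -> cl (cl A) = cl A.
Proof.
move=> AX; apply/seteqP; split; last exact/ent_cl_extensive/ent_cl_sub_carrier.
move=> x /ent_clP [Xx clclAx]; apply/ent_clP; split=> // e p OepXA.
by apply: clclAx; apply/(outcome_subsetD_ent_cl e p _ AX).
Qed.

Lemma ent_cl0 : cl set0 = set0.
Proof.
apply/seteqP; split=> // x /ent_clP [[[e p] _ Oepx] clx].
by apply: clx Oepx; apply/outcome_subsetD_carrier => y _ [].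
Qed.

Lemma ent_cl_is_closure_op : is_closure_op X cl.
Proof.
split=> [A _|A|A B _ _|A|]; [exact: ent_cl_sub_carrier | exact: ent_cl_extensive
  | exact: ent_cl_monotone | exact: ent_cl_idem | exact: ent_cl0].
Qed.

Lemma ent_cl_carrierD_outcome e p : cl (X `\` O e p) = X `\` O e p.
Proof.
apply/seteqP; split; last by apply: ent_cl_extensive => x [].
move=> x /ent_clP [Xx clx]; split=> // Oepx; apply: clx Oepx.
by apply/outcome_subsetD_carrier => y Oepy [].
Qed.

Lemma outcome_cl_open e p : cl_open X cl (O e p).
Proof.
split; first exact: outcome_sub_carrier.
by split; [move=> x [] | exact: ent_cl_carrierD_outcome].
Qed.

Lemma eig_ent_int A : A `<=` X -> eig O A = eig O (ent_int O A).
Proof.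
have XAX : X `\` A `<=` X by move=> x [].
move=> AX; apply/seteqP; split=> [[e p] /= OepA|[e p] /=].
- apply/(outcome_subsetD_ent_cl e p _ XAX) => x Oepx.
  by split; [exact: outcome_sub_carrier Oepx | case=> _; apply; exact: OepA].
- move=> /(outcome_subsetD_ent_cl e p _ XAX) OepXXA x /OepXXA [Xx notXAx].
  by apply: contrapT => notAx; apply: notXAx.
Qed.

End EntityClosure.

Theorem mainTheorem18 (E Sig T : Type) (O : E -> Sig -> set T)
  (HO : forall e p, O e p !=set0) :
  [/\ is_closure_op (carrier O) (ent_cl O),
      (forall e p, cl_open (carrier O) (ent_cl O) (O e p)),
      (forall e p (A : set T), A `<=` carrier O ->
         (O e p `<=` carrier O `\` ent_cl O A <-> O e p `<=` carrier O `\` A))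
    & (forall A : set T, A `<=` carrier O -> eig O A = eig O (ent_int O A))].
Proof.
split; [exact: ent_cl_is_closure_op | exact: outcome_cl_open
  | exact: outcome_subsetD_ent_cl | exact: eig_ent_int].
Qed.
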